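(* Let $n=1$, $r\in\{-1,+1\}$ and $\Phi(x,y)=r\phi(x-y)$. Let $f:\mathbb R\to\mathbb R$, $f(x)=\max_{i\in\{1,2\}}\Phi(x,y_i)-\beta_i$ for some $y_i,\beta_i\in\mathbb R$. Then for every $(\bar x,\bar v)\in\operatorname{graph}\partial f$, $f(x)\ge f(\bar x)+r\phi(x-\bar x+(\phi^* )'(r\bar v))-r\phi((\phi^* )'(r\bar v))$ for all $x\in\mathbb R$; i.e. $f$ is a-strongly convex if $r=+1$ and a-weakly convex if $r=-1$.
   Context: Standing assumption (here with $n=1$): $\phi:\mathbb R\to\mathbb R$ is convex, finite-valued, differentiable and strictly convex, super-coercive; $\phi^*$ has the same properties and $(\phi^* )'=(\phi')^{-1}$. $\partial f$ is the limiting subdifferential. a-weak convexity: for every $(\bar x,\bar v)\in\operatorname{graph}\partial f$, $f(x)\ge f(\bar x)-\phi(x-\bar x+(\phi^* )'(-\bar v))+\phi((\phi^* )'(-\bar v))$ for all $x$; a-strong convexity: $f(x)\ge f(\bar x)+\phi(x-\bar x+(\phi^* )'(\bar v))-\phi((\phi^* )'(\bar v))$ for all $x$. *)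

From HB Require Import structures.
From mathcomp Require Import all_boot all_order all_algebra.
From mathcomp Require Import all_classical all_reals all_analysis.
Set Implicit Arguments. Unset Strict Implicit. Unset Printing Implicit Defensive.
Import Order.TTheory GRing.Theory Num.Theory.
Import numFieldNormedType.Exports.
Local Open Scope classical_set_scope.
Local Open Scope ring_scope.

Section Defs.
Variable R : realType.

Definition convex_fun (g : R -> R) : Prop :=
  forall x y t, 0 <= t -> t <= 1 ->
    g (t * x + (1 - t) * y) <= t * g x + (1 - t) * g y.

Definition strictly_convex_fun (g : R -> R) : Prop :=
  forall x y t, x != y -> 0 < t -> t < 1 ->
    g (t * x + (1 - t) * y) < t * g x + (1 - t) * g y.

Definition differentiable_fun (g : R -> R) : Prop :=
  forall x, derivable g x 1.

Definition super_coercive (g : R -> R) : Prop :=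
  forall M : R, exists K : R, forall x : R, K < `|x| -> M < g x / `|x|.

Definition fconj (g : R -> R) (y : R) : R :=
  sup [set z | exists x, z = x * y - g x].

Definition frechet_subgrad (f : R -> R) (x v : R) : Prop :=
  forall eps : R, 0 < eps ->
    \forall y \near x, - (eps * `|y - x|) <= f y - f x - v * (y - x).

Definition limiting_subgrad (f : R -> R) (x v : R) : Prop :=
  exists (xs vs : nat -> R),
    xs n @[n --> \oo] --> x /\
    f (xs n) @[n --> \oo] --> f x /\
    vs n @[n --> \oo] --> v /\
    (forall n, frechet_subgrad f (xs n) (vs n)).

Definition standing_phi (phi : R -> R) : Prop :=
  convex_fun phi /\ differentiable_fun phi /\ strictly_convex_fun phi /\
  super_coercive phi /\
  convex_fun (fconj phi) /\ differentiable_fun (fconj phi) /\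
  strictly_convex_fun (fconj phi) /\ super_coercive (fconj phi) /\
  (forall x, derive1 (fconj phi) (derive1 phi x) = x) /\
  (forall y, derive1 phi (derive1 (fconj phi) y) = y).

End Defs.

From HB Require Import structures.
From mathcomp Require Import all_boot all_order all_algebra.
From mathcomp Require Import all_classical all_reals all_analysis.
From mathcomp Require Import ring lra.
Import Order.TTheory GRing.Theory Num.Theory.
Import numFieldNormedType.Exports.
Local Open Scope classical_set_scope.
Local Open Scope ring_scope.

(* Write f = max(g_true, g_false) with pieces
   g_i(x) = r phi(x - y_i) - b_i, and put w = (phi^* )'(r vb), so that
   phi'(w) = r vb.
   - One-sided slopes: a Frechet subgradient v at p of a maximum of two
     functions admitting one-sided derivatives d_i in the direction sg = +-1
     satisfies sg v <= d_i for some active piece i.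
   - Convex analysis of phi: tangent inequality, strict monotonicity of phi',
     and monotonicity of the increments s |-> phi(t + s) - phi(s).
   - Applied to the pieces, for tau = +-1 some active piece has
     tau (r v) <= tau phi'(p - y_i); using the strict monotonicity of phi'
     this passes to the limit along a sequence defining the limiting
     subgradient: there are active pieces i, j at xb with
     xb - y_j <= w <= xb - y_i.
   - Since w lies between xb - y_j and xb - y_i, the monotonicity of
     increments bounds r (phi(x - xb + w) - phi(w)) by the corresponding
     increment of one of these two active pieces, which gives the claimed
     lower bound on f(x). *)

Section OneDimensional.
Variable R : realType.

Definition is_sign (s : R) : Prop := s = 1 \/ s = -1.

Lemma diff_quotient_cvg (g : R -> R) (a : R) :
  derivable g a 1 ->
  (fun h => h^-1 * (g (h + a) - g a)) @ (0:R)^' --> derive1 g a.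
Proof.
move=> dg; rewrite derive1E; apply: cvg_trans dg; apply: near_eq_cvg.
by near=> h; rewrite /= [_%:A]mulr1.
Unshelve. all: by end_near. Qed.

Lemma one_sided_quotient_cvg {g : R -> R} {a sg : R} :
  derivable g a 1 -> is_sign sg ->
  (fun s => (g (a + sg * s) - g a) / s) @ 0^'+ --> sg * derive1 g a.
Proof.
move=> /diff_quotient_cvg dq [->|->].
  rewrite mul1r; apply: cvg_trans (cvg_dnbhs_at_right dq); apply: near_eq_cvg.
  by near=> s; rewrite /= mul1r (addrC s) mulrC.
have := cvg_dnbhs_at_left dq; rewrite cvg_at_leftNP oppr0 => /cvgN dqN.
rewrite mulN1r; apply: cvg_trans dqN; apply: near_eq_cvg; near=> s.
by rewrite !fctE /= invrN mulNr opprK mulN1r (addrC (- s)) mulrC.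
Unshelve. all: by end_near. Qed.

Lemma frechet_one_sided (F : R -> R) (p v sg eps : R) :
  frechet_subgrad F p v -> is_sign sg -> 0 < eps ->
  \forall s \near 0^'+, F p + (sg * v - eps) * s <= F (p + sg * s).
Proof.
move=> hF hsg eps0.
have step : (p + sg * s) @[s --> 0^'+] --> p.
  have : (p + sg * s) @[s --> 0] --> p + sg * 0.
    by apply: cvgD; [exact: cvg_cst | apply: cvgM; [exact: cvg_cst | exact: cvg_id]].
  by rewrite mulr0 addr0 => /cvg_at_right_filter.
near=> s.
have s0 : 0 < s by near: s; exact: nbhs_right_gt.
have shift : p + sg * s - p = sg * s by ring.
have : - (eps * `|p + sg * s - p|) <= F (p + sg * s) - F p - v * (p + sg * s - p).
  by near: s; exact: (step _ (hF eps eps0)).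
rewrite shift.
have -> : `|sg * s| = s.
  by rewrite normrM (gtr0_norm s0); case: hsg => ->; rewrite ?normrN normr1 mul1r.
lra.
Unshelve. all: by end_near. Qed.

Lemma eventually_below_line (g : R -> R) (p sg d c m : R) :
  (fun s => (g (p + sg * s) - g p) / s) @ 0^'+ --> d ->
  g p < c \/ (g p = c /\ d < m) ->
  \forall s \near 0^'+, g (p + sg * s) < c + m * s.
Proof.
move=> hq; set q := fun s => (g (p + sg * s) - g p) / s.
have split_q : \forall s \near 0^'+, g (p + sg * s) - (c + m * s) = (g p - c) + s * (q s - m).
  near=> s; have s0 : s != 0 by near: s; exact: nbhs_right_neq.
  by rewrite /q mulrBr mulrCA mulfV // mulr1; ring.
case=> [gc|[gc dm]].
- have lim : (g p - c) + s * (q s - m) @[s --> 0^'+] --> (g p - c) + 0 * (d - m).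
    apply: cvgD; first exact: cvg_cst.
    apply: cvgM; first exact: cvg_at_right_filter cvg_id.
    by apply: cvgB; [exact: hq | exact: cvg_cst].
  rewrite mul0r addr0 in lim.
  have neg : \forall s \near 0^'+, (g p - c) + s * (q s - m) < 0.
    by apply: (cvgr_lt _ lim); rewrite subr_lt0.
  near=> s; rewrite -subr_lt0.
  have -> : g (p + sg * s) - (c + m * s) = (g p - c) + s * (q s - m) by near: s.
  by near: s.
- near=> s; rewrite -subr_lt0.
  have -> : g (p + sg * s) - (c + m * s) = (g p - c) + s * (q s - m) by near: s.
  rewrite gc subrr add0r pmulr_rlt0; last by near: s; exact: nbhs_right_gt.
  rewrite subr_lt0; near: s; exact: (cvgr_lt _ hq).
Unshelve. all: by end_near. Qed.

Lemma frechet_max_active_slope (g : bool -> R -> R) (p v sg : R) {d : bool -> R} :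
  is_sign sg ->
  (forall i, (fun s => (g i (p + sg * s) - g i p) / s) @ 0^'+ --> d i) ->
  frechet_subgrad (fun x => Num.max (g true x) (g false x)) p v ->
  exists i, g i p = Num.max (g true p) (g false p) /\ sg * v <= d i.
Proof.
move=> hsg hd hF; set F := fun x => Num.max (g true x) (g false x).
apply: contrapT => /forallNP no_witness.
have gap i : \forall eps \near 0^'+,
    g i p < F p \/ (g i p = F p /\ d i < sg * v - eps).
  have below : g i p <= F p by case: i {no_witness}; rewrite /F le_max lexx ?orbT.
  have [active|inactive] := eqVneq (g i p) (F p); last first.
    by apply: nearW => eps; left; rewrite lt_neqAle inactive below.
  have slope : d i < sg * v.
    by rewrite ltNge; apply/negP => le_vd; apply: (no_witness i).
  near=> eps; right; split => //.
  suff : eps < sg * v - d i by lra.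
  by near: eps; apply: nbhs_right_lt; rewrite subr_gt0.
have [eps [eps0 gap_eps]] : exists eps, 0 < eps /\
    forall i, g i p < F p \/ (g i p = F p /\ d i < sg * v - eps).
  have : \forall eps \near 0^'+, 0 < eps /\
      forall i, g i p < F p \/ (g i p = F p /\ d i < sg * v - eps).
    near=> eps; split; first by near: eps; exact: nbhs_right_gt.
    by case; near: eps; [exact: gap true | exact: gap false].
  by move=> /filter_ex [eps H]; exists eps.
have : \forall s \near (0 : R)^'+, False.
  near=> s.
  have lower : F p + (sg * v - eps) * s <= F (p + sg * s).
    by near: s; exact: frechet_one_sided.
  have up_true : g true (p + sg * s) < F p + (sg * v - eps) * s.
    by near: s; exact: eventually_below_line (hd true) (gap_eps true).
  have up_false : g false (p + sg * s) < F p + (sg * v - eps) * s.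
    by near: s; exact: eventually_below_line (hd false) (gap_eps false).
  by move: lower; rewrite /F le_max !leNgt up_true up_false.
by case/filter_ex.
Unshelve. all: by end_near. Qed.

Section ConvexDifferentiable.
Variable phi : R -> R.
Hypotheses (hconv : convex_fun phi) (hder : differentiable_fun phi).
Hypothesis hstr : strictly_convex_fun phi.

Lemma convex_chord (a sg s L : R) : is_sign sg -> 0 < s -> s <= L ->
  L * (phi (a + sg * s) - phi a) <= s * (phi (a + sg * L) - phi a).
Proof.
move=> hsg s0 sL; have L0 : 0 < L := lt_le_trans s0 sL.
set t := s / L.
have t0 : 0 <= t by rewrite divr_ge0 ?ltW.
have t1 : t <= 1 by rewrite ler_pdivrMr // mul1r.
have Lt : L * t = s by rewrite /t mulrCA mulfV ?gt_eqF // mulr1.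
have := hconv (a + sg * L) a t t0 t1.
have -> : t * (a + sg * L) + (1 - t) * a = a + sg * s.
  by rewrite /t; field; rewrite gt_eqF.
rewrite -(ler_pM2l L0) mulrDr mulrA Lt mulrA mulrBr mulr1 Lt.
lra.
Qed.

(* Tangent inequality along a ray, obtained as the limit of the chord
   inequality. *)
Lemma tangent_dir (a sg L : R) : is_sign sg -> 0 < L ->
  phi a + sg * L * derive1 phi a <= phi (a + sg * L).
Proof.
move=> hsg L0.
have : sg * derive1 phi a <= (phi (a + sg * L) - phi a) / L.
  apply: (cvgr_to_le (one_sided_quotient_cvg (hder a) hsg)) => //; near=> s.
  have s0 : 0 < s by near: s; exact: nbhs_right_gt.
  have sL : s <= L by near: s; exact: nbhs_right_le.
  rewrite ler_pdivrMr // mulrAC ler_pdivlMr // [X in X <= _]mulrC [X in _ <= X]mulrC.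
  exact: convex_chord.
rewrite ler_pdivlMr // => H; lra.
Unshelve. all: by end_near. Qed.

Lemma tangent (a z : R) : phi a + derive1 phi a * (z - a) <= phi z.
Proof.
case: (ltrgtP z a) => [za|az|->]; last by rewrite subrr mulr0 addr0.
- have d0 : 0 < a - z by rewrite subr_gt0.
  have := @tangent_dir a (-1) (a - z) (or_intror erefl) d0.
  rewrite (_ : a + -1 * (a - z) = z); [lra | ring].
- have d0 : 0 < z - a by rewrite subr_gt0.
  have := @tangent_dir a 1 (z - a) (or_introl erefl) d0.
  rewrite (_ : a + 1 * (z - a) = z); [lra | ring].
Qed.

Lemma derive_strict_mono (a b : R) : a < b -> derive1 phi a < derive1 phi b.
Proof.
move=> ab; set m := (a + b) / 2; set h := m - a.
have h0 : 0 < h by rewrite /h /m; lra.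
have mid : phi m < 1 / 2 * phi a + (1 - 1 / 2) * phi b.
  have -> : m = 1 / 2 * a + (1 - 1 / 2) * b by rewrite /m; field.
  by apply: hstr; rewrite ?(lt_eqF ab) //; lra.
have ta := tangent a m; have tb := tangent b m.
have mb : m - b = - h by rewrite /h /m; field.
rewrite mb in tb; rewrite -/h in ta.
have key : derive1 phi a * h < derive1 phi b * h by lra.
by rewrite ltr_pM2r in key.
Qed.

Lemma signed_derive_mono {tau a b : R} : is_sign tau ->
  tau * a < tau * b -> tau * derive1 phi a < tau * derive1 phi b.
Proof.
by case=> ->; rewrite ?mul1r ?mulN1r ?ltrN2 => ?; exact: derive_strict_mono.
Qed.

Lemma convex_majorization (a b c d : R) : a <= b -> b <= d -> a <= c -> c <= d ->
  b + c = a + d -> phi b + phi c <= phi a + phi d.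
Proof.
move=> ab bd ac cd e.
have [ad|ad] := eqVneq a d.
  have -> : b = a by apply/eqP; rewrite eq_le ab andbT ad.
  have -> : c = a by apply/eqP; rewrite eq_le ac andbT ad.
  by rewrite ad.
have da : 0 < d - a by rewrite subr_gt0 lt_neqAle ad (le_trans ab bd).
set l := (d - b) / (d - a).
have l0 : 0 <= l by apply: divr_ge0; lra.
have l1 : l <= 1 by rewrite ler_pdivrMr // mul1r; lra.
have := hconv a d l l0 l1; have := hconv d a l l0 l1.
have -> : l * a + (1 - l) * d = b by rewrite /l; field; rewrite subr_eq0 eq_sym.
have -> : l * d + (1 - l) * a = c.
  have -> : c = a + d - b by rewrite -e; ring.
  by rewrite /l; field; rewrite subr_eq0 eq_sym.
lra.
Qed.

Lemma increment_mono {t s s' : R} : 0 <= t -> s <= s' ->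
  phi (t + s) - phi s <= phi (t + s') - phi s'.
Proof.
move=> t0 ss'.
have := @convex_majorization s (t + s) s' (t + s'); lra.
Qed.

Lemma increment_between (t : R) {r w a1 a2 : R} : is_sign r -> a2 <= w -> w <= a1 ->
  r * (phi (t + w) - phi w) <= r * (phi (t + a1) - phi a1) \/
  r * (phi (t + w) - phi w) <= r * (phi (t + a2) - phi a2).
Proof.
move=> hr a2w wa1.
have [t0|t0] := lerP 0 t.
  have := increment_mono t0 a2w; have := increment_mono t0 wa1.
  by case: hr => ->; rewrite ?mul1r ?mulN1r ?lerN2; [left | right].
have u0 : 0 <= - t by lra.
have ta2w : t + a2 <= t + w by rewrite lerD2l.
have twa1 : t + w <= t + a1 by rewrite lerD2l.
have := increment_mono u0 ta2w; have := increment_mono u0 twa1.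
rewrite !addrA !addNr !add0r.
by case: hr => -> ? ?; rewrite ?mul1r ?mulN1r ?lerN2; [right | left]; lra.
Qed.

Lemma slope_order_persists {tau w a : R} {an un : nat -> R} : is_sign tau ->
  an n @[n --> \oo] --> a -> un n @[n --> \oo] --> derive1 phi w ->
  tau * a < tau * w -> \forall n \near \oo, tau * derive1 phi (an n) < tau * un n.
Proof.
move=> htau ca cu aw; set c := (a + w) / 2.
have ac : tau * a < tau * c by case: htau aw => -> /=; rewrite /c; lra.
have cw : tau * c < tau * w by case: htau aw => -> /=; rewrite /c; lra.
have tca : tau * an n @[n --> \oo] --> tau * a by apply: cvgM => //; exact: cvg_cst.
have tcu : tau * un n @[n --> \oo] --> tau * derive1 phi w.
  by apply: cvgM => //; exact: cvg_cst.
near=> n; apply: (@lt_trans _ _ (tau * derive1 phi c)).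
  apply: signed_derive_mono => //; near: n; exact: (cvgr_lt _ tca).
near: n; apply: (cvgr_gt _ tcu); exact: signed_derive_mono.
Unshelve. all: by end_near. Qed.

Section MaxOfTwoPieces.
Variables (r : R) (y b : bool -> R).
Hypothesis hr : is_sign r.

Definition piece (i : bool) (x : R) : R := r * phi (x - y i) - b i.

Definition fmax (x : R) : R := Num.max (piece true x) (piece false x).

Lemma piece_le_fmax (i : bool) (x : R) : piece i x <= fmax x.
Proof. by case: i; rewrite /fmax le_max lexx ?orbT. Qed.

Lemma piece_continuous (i : bool) (x : R) : {for x, continuous (piece i)}.
Proof.
apply: continuousB; last exact: cst_continuous.
apply: continuousM; first exact: cst_continuous.
apply: (@continuous_comp _ _ _ (fun z => z - y i) phi).
  by apply: continuousB; [exact: cvg_id | exact: cst_continuous].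
exact/differentiable_continuous/derivable1_diffP.
Qed.

Lemma piece_quotient_cvg (i : bool) (p : R) {sg : R} : is_sign sg ->
  (fun s => (piece i (p + sg * s) - piece i p) / s) @ 0^'+ -->
    sg * (r * derive1 phi (p - y i)).
Proof.
move=> hsg; rewrite mulrCA.
have -> : (fun s => (piece i (p + sg * s) - piece i p) / s) =
    (fun s => r * ((phi (p - y i + sg * s) - phi (p - y i)) / s)).
  by apply/funext => s; rewrite /piece mulrA; congr (_ / _); rewrite (addrAC p); ring.
by apply: cvgM; [exact: cvg_cst | exact: one_sided_quotient_cvg (hder _) hsg].
Qed.

Lemma frechet_active_piece (p v tau : R) : is_sign tau -> frechet_subgrad fmax p v ->
  exists i, piece i p = fmax p /\ tau * (r * v) <= tau * derive1 phi (p - y i).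
Proof.
move=> htau hF.
have hsg : is_sign (r * tau).
  by case: hr => ->; case: htau => ->; rewrite ?mul1r ?mulN1r ?opprK; [left|right|right|left].
have [i [active slope]] := frechet_max_active_slope piece p v (r * tau) hsg
  (fun i => piece_quotient_cvg i p hsg) hF.
exists i; split => //.
by move: slope; case: hr => ->; case: htau => ->; lra.
Qed.

Section Limit.
Context {xs vs : nat -> R} {xb vb w tau : R}.
Hypotheses (cx : xs n @[n --> \oo] --> xb) (cf : fmax (xs n) @[n --> \oo] --> fmax xb).
Hypotheses (cv : vs n @[n --> \oo] --> vb) (hw : derive1 phi w = r * vb).
Hypothesis htau : is_sign tau.

Lemma witness_fails_eventually (i : bool) :
  ~ (piece i xb = fmax xb /\ tau * w <= tau * (xb - y i)) ->
  \forall n \near \oo,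
    ~ (piece i (xs n) = fmax (xs n) /\ tau * (r * vs n) <= tau * derive1 phi (xs n - y i)).
Proof.
move=> no_witness.
have [active|inactive] := eqVneq (piece i xb) (fmax xb).
  have order : tau * (xb - y i) < tau * w.
    by rewrite ltNge; apply/negP => le_w; apply: no_witness.
  have ca : (xs n - y i) @[n --> \oo] --> xb - y i by apply: cvgB => //; exact: cvg_cst.
  have cu : (r * vs n) @[n --> \oo] --> derive1 phi w.
    by rewrite hw; apply: cvgM => //; exact: cvg_cst.
  near=> n => -[_]; apply/negP; rewrite -ltNge.
  by near: n; exact: (slope_order_persists htau ca cu order).
have gap : piece i (xs n) - fmax (xs n) @[n --> \oo] --> piece i xb - fmax xb.
  by apply: cvgB => //; exact: (cvg_comp _ _ cx (piece_continuous i xb)).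
have neg : piece i xb - fmax xb < 0.
  by rewrite subr_lt0 lt_neqAle inactive piece_le_fmax.
near=> n => -[active _]; move: active; apply/eqP; rewrite lt_eqF // -subr_lt0.
by near: n; exact: (cvgr_lt _ gap).
Unshelve. all: by end_near. Qed.

Lemma limiting_active_piece : (forall n, frechet_subgrad fmax (xs n) (vs n)) ->
  exists i, piece i xb = fmax xb /\ tau * w <= tau * (xb - y i).
Proof.
move=> hF; apply: contrapT => /forallNP no_witness.
have fails := fun i => witness_fails_eventually i (no_witness i).
have : \forall n \near \oo, False.
  near=> n; have [[] witness] := frechet_active_piece (xs n) (vs n) tau htau (hF n).
    by move: witness; near: n; exact: fails true.
  by move: witness; near: n; exact: fails false.
by case/filter_ex.
Unshelve. all: by end_near. Qed.

End Limit.

Lemma fmax_lower_bound (xb w x : R) (i j : bool) :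
  piece i xb = fmax xb -> w <= xb - y i ->
  piece j xb = fmax xb -> xb - y j <= w ->
  fmax xb + r * phi (x - xb + w) - r * phi w <= fmax x.
Proof.
move=> act_i w_i act_j w_j; set t := x - xb.
have via k : piece k xb = fmax xb ->
    r * (phi (t + w) - phi w) <= r * (phi (t + (xb - y k)) - phi (xb - y k)) ->
    fmax xb + r * phi (t + w) - r * phi w <= fmax x.
  move=> act_k le_k; apply: le_trans (piece_le_fmax k x).
  rewrite -act_k /piece (_ : x - y k = t + (xb - y k)); first lra.
  by rewrite /t; ring.
have [le_i|le_j] := increment_between t hr w_j w_i.
  exact: via le_i.
exact: via le_j.
Qed.

Lemma fmax_limiting_bound (xs vs : nat -> R) (xb vb w x : R) :
  xs n @[n --> \oo] --> xb -> fmax (xs n) @[n --> \oo] --> fmax xb ->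
  vs n @[n --> \oo] --> vb -> (forall n, frechet_subgrad fmax (xs n) (vs n)) ->
  derive1 phi w = r * vb ->
  fmax xb + r * phi (x - xb + w) - r * phi w <= fmax x.
Proof.
move=> cx cf cv hF hw.
have [i [act_i w_i]] := limiting_active_piece cx cf cv hw (or_introl erefl) hF.
have [j [act_j w_j]] := limiting_active_piece cx cf cv hw (or_intror erefl) hF.
rewrite !mul1r in w_i; rewrite !mulN1r lerN2 in w_j.
exact: fmax_lower_bound act_i w_i act_j w_j.
Qed.

End MaxOfTwoPieces.

End ConvexDifferentiable.

End OneDimensional.

Theorem mainTheorem15 (R : realType) (phi : R -> R) (r y1 y2 b1 b2 : R) :
  standing_phi phi ->
  (r = 1 \/ r = -1) ->
  let f := fun x : R => Num.max (r * phi (x - y1) - b1) (r * phi (x - y2) - b2) in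
  forall xb vb : R, limiting_subgrad f xb vb ->
  forall x : R,
    f xb + r * phi (x - xb + derive1 (fconj phi) (r * vb))
         - r * phi (derive1 (fconj phi) (r * vb)) <= f x.
Proof.
move=> [hconv [hder [hstr [_ [_ [_ [_ [_ [_ hinv]]]]]]]]] hr f xb vb.
move=> [xs [vs [cx [cf [cv hF]]]]] x.
pose y i := if i then y1 else y2; pose b i := if i then b1 else b2.
exact: (fmax_limiting_bound _ _ hconv hder hstr r y b hr xs vs xb vb _ x cx cf cv hF (hinv _)).
Qed.
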